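(* The number of $\mathbb{F}_q$-linear automorphisms of $\mathbb{F}_{q^m}$ that are fully linear over $\mathbb{F}_{q^m}$ is exactly $m(q^m-1)$.
   Context: $q$ is a prime power (the paper takes $q$ a power of $2$). An $\mathbb{F}_q$-linear automorphism of $\mathbb{F}_{q^m}$ is a bijective $\mathbb{F}_q$-linear map $\varphi:\mathbb{F}_{q^m}\to\mathbb{F}_{q^m}$, applied componentwise to vectors. For an $\mathbb{F}_{q^m}$-linear code $\mathcal{C}\subseteq\mathbb{F}_{q^m}^n$, $\varphi$ is linear on $\mathcal{C}$ if $\varphi(\mathcal{C})=\{\varphi(\bm{c}):\bm{c}\in\mathcal{C}\}$ is an $\mathbb{F}_{q^m}$-linear subspace. $\varphi$ is fully linear over $\mathbb{F}_{q^m}$ if it is linear on every $\mathbb{F}_{q^m}$-linear code of every length $n\ge1$. *)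

From HB Require Import structures.
From mathcomp Require Import all_boot all_order all_algebra all_field.
Set Implicit Arguments. Unset Strict Implicit. Unset Printing Implicit Defensive.
Import GRing.Theory.
Local Open Scope ring_scope.

(* L plays the role of F_{q^m}; the subfield F_q is {c : L | c^q = c}. *)
Definition in_Fq (q : nat) (L : finFieldType) (c : L) : bool := c ^+ q == c.

Definition Fq_linear (q : nat) (L : finFieldType) (f : L -> L) : Prop :=
  (forall x y : L, f (x + y) = f x + f y) /\
  (forall c x : L, in_Fq q c -> f (c * x) = c * f x).

Definition Fq_lin_aut (q : nat) (L : finFieldType) (f : L -> L) : Prop :=
  Fq_linear q f /\ bijective f.

Definition linear_on (L : finFieldType) (n : nat) (f : L -> L)
    (C : {vspace 'rV[L]_n}) : Prop :=
  exists D : {vspace 'rV[L]_n},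
    forall w : 'rV[L]_n, w \in D <-> exists2 c, c \in C & w = map_mx f c.

Definition fully_linear (L : finFieldType) (f : L -> L) : Prop :=
  forall n : nat, (0 < n)%N -> forall C : {vspace 'rV[L]_n}, linear_on f C.

From HB Require Import structures.
From mathcomp Require Import all_boot all_order all_algebra all_field all_fingroup all_solvable.
From mathcomp Require Import zify.
Set Implicit Arguments. Unset Strict Implicit. Unset Printing Implicit Defensive.
Import GRing.Theory.
Local Open Scope ring_scope.

(* We
   show that the F_q-linear automorphisms of L that are fully linear are
   exactly the "monomial" maps x |-> a * x^(q^i) with a <> 0 and i < m, and
   that these m * (q^m - 1) maps are pairwise distinct.
   - Monomial maps are bijective, F_q-linear and semilinear over L (they
     intertwine scaling by mu with scaling by mu^(q^(m-i))); every additive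
     semilinear map sends an L-subspace of L^n onto an L-subspace, hence is
     fully linear.
   - Conversely, applying full linearity to the line spanned by (1, b) shows
     that g := f / f(1) is multiplicative, so g is a field automorphism of L
     fixing F_q.  Such an automorphism permutes the roots of the polynomial
     prod_(i < m) (X - a^(q^i)), whose coefficients lie in F_q; taking for a a
     generator of the cyclic group L^*, g is a power x |-> x^(q^i), i < m.
   - The Frobenius powers x |-> x^(q^i), i < m, are distinct because a
     generator of L^* has order q^m - 1. *)

Section RingEndofunction.
Variables (R : nzRingType) (h : R -> R).
Hypotheses (hD : forall x y, h (x + y) = h x + h y)
  (hM : forall x y, h (x * y) = h x * h y) (h1 : h 1 = 1).

Let h0 : h 0 = 0.
Proof. by apply: (addrI (h 0)); rewrite -hD !addr0. Qed.

HB.instance Definition _ := GRing.isNmodMorphism.Build R R h (h0, hD).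
HB.instance Definition _ := GRing.isMonoidMorphism.Build R R h (h1, hM).

Lemma map_prod_XsubC (rs : seq R) :
  map_poly h (\prod_(x <- rs) ('X - x%:P)) = \prod_(x <- map h rs) ('X - x%:P).
Proof. by rewrite rmorph_prod big_map; apply: eq_bigr => x _; apply: map_polyXsubC. Qed.

Lemma root_map_endo (P : {poly R}) x : root P x -> root (map_poly h P) (h x).
Proof. exact: rmorph_root. Qed.

Lemma endo_exp x n : h (x ^+ n) = h x ^+ n.
Proof. exact: rmorphXn. Qed.

End RingEndofunction.

Lemma unit_generator (L : finFieldType) : exists u : {unit L},
  (forall x : L, x != 0 -> exists n, x = val u ^+ n) /\ #[u]%g = #|L|.-1.
Proof.
have /cyclicP [u Du] := field_unit_group_cyclic [set: {unit L}]%G.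
exists u; split; last by rewrite /order -Du card_finField_unit.
move=> x x0; have ux : x \is a GRing.unit by rewrite unitfE.
have : FinRing.unit L ux \in <[u]>%g by rewrite -Du inE.
by case/cycleP => n /(congr1 val) /= ->; exists n; rewrite FinRing.val_unitX.
Qed.

(* An additive map that is semilinear over L (scaling by mu is intertwined
   with scaling by some lambda) maps every code onto the span of its image,
   hence is fully linear. *)
Lemma semilinear_fully_linear (L : finFieldType) (f : L -> L) :
  (forall x y, f (x + y) = f x + f y) ->
  (forall mu, exists lambda, forall x, mu * f x = f (lambda * x)) ->
  fully_linear f.
Proof.
move=> fD fS n _ C.
have f0 : f 0 = 0 by apply: (addrI (f 0)); rewrite -fD !addr0.
set S := [seq map_mx f w | w in C].
exists <<S>>%VS => w; split => [Sw | [c Cc ->]]; last first.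
  by apply: memv_span; apply/imageP; exists c.
rewrite (coord_span Sw).
apply: (big_ind (fun w => exists2 c, c \in C & w = map_mx f c)).
- by exists 0; rewrite ?mem0v //; apply/matrixP => r s; rewrite !mxE f0.
- move=> _ _ [c1 C1 ->] [c2 C2 ->]; exists (c1 + c2); first exact: memvD.
  by apply/matrixP => r s; rewrite !mxE fD.
- move=> j _; have [lambda Hl] := fS (coord S j w).
  have /imageP [c Cc ->] : S`_j \in S.
    by apply: mem_nth; rewrite size_map -cardE ltn_ord.
  exists (lambda *: c); first exact: memvZ.
  by apply/matrixP => r s; rewrite !mxE Hl.
Qed.

(* A fully linear injective map is multiplicative up to the factor f 1:
   apply full linearity to the line spanned by the code word (1, b). *)
Lemma fully_linear_mul (L : finFieldType) (f : L -> L) :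
  injective f -> fully_linear f -> f 1 != 0 ->
  forall x b, f (x * b) = f x * f b / f 1.
Proof.
move=> finj fl f10 x b.
pose v : 'rV[L]_2 := \row_(j < 2) (if val j == 0%N then 1 else b).
have [D HD] := fl 2 isT <[v]>%VS.
have fvD : map_mx f v \in D by apply/HD; exists v; [exact: memv_line|].
have /HD [c /vlineP [y ->] E] : (f x / f 1) *: map_mx f v \in D by exact: memvZ.
have E0 := congr1 (fun M : 'rV[L]_2 => M ord0 ord0) E.
have E1 := congr1 (fun M : 'rV[L]_2 => M ord0 (@Ordinal 2 1 isT)) E.
rewrite !mxE /= mulr1 divfK // in E0 E1.
by rewrite -(finj _ _ E0) in E1; rewrite -E1 mulrAC.
Qed.

Section FrobeniusPowers.
Variables (L : finFieldType) (p k q m : nat).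
Hypotheses (pp : prime p) (kp : (0 < k)%N) (qE : q = (p ^ k)%N) (mp : (0 < m)%N)
  (cardL : #|L| = (q ^ m)%N).

Lemma q_gt1 : (1 < q)%N.
Proof. by rewrite qE -(expn0 p) ltn_exp2l ?prime_gt1. Qed.

Lemma charL : p \in [pchar L].
Proof. by apply: (@card_finPcharP L p (k * m)) => //; rewrite cardL qE expnM. Qed.

(* x |-> x^(q^i) is additive, being a power of the Frobenius map. *)
Lemma frobqD i (x y : L) : (x + y) ^+ (q ^ i) = x ^+ (q ^ i) + y ^+ (q ^ i).
Proof.
apply: exprDn_pchar; rewrite (eq_pnat _ (pcharf_eq charL)) qE -expnM.
by rewrite pnatX pnat_id.
Qed.

Lemma frobq0 i : (0 : L) ^+ (q ^ i) = 0.
Proof. by rewrite expr0n expn_eq0 (negbTE (lt0n_neq0 (ltnW q_gt1))). Qed.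

Lemma frobq_m (x : L) : x ^+ (q ^ m) = x.
Proof. by rewrite -cardL expf_card. Qed.

Lemma frobqK i (x : L) : (i <= m)%N -> (x ^+ (q ^ i)) ^+ (q ^ (m - i)) = x.
Proof. by move=> im; rewrite -exprM -expnD subnKC // frobq_m. Qed.

Lemma frobqVK i (x : L) : (i <= m)%N -> (x ^+ (q ^ (m - i))) ^+ (q ^ i) = x.
Proof. by move=> im; rewrite -exprM -expnD addnC subnKC // frobq_m. Qed.

Lemma in_Fq_frobq (c : L) i : in_Fq q c -> c ^+ (q ^ i) = c.
Proof.
move=> /eqP cq; elim: i => [|i IH]; first by rewrite expr1.
by rewrite expnSr exprM IH cq.
Qed.

Definition conj_poly (a : L) : {poly L} :=
  \prod_(x <- [seq a ^+ (q ^ i) | i <- iota 0 m]) ('X - x%:P).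

Lemma root_conj_poly (a : L) : root (conj_poly a) a.
Proof.
by rewrite root_prod_XsubC; apply/mapP; exists 0%N; rewrite ?mem_iota ?expn0 ?expr1.
Qed.

(* The Frobenius x |-> x^q permutes the conjugates cyclically, so it fixes
   conj_poly a; hence its coefficients lie in F_q. *)
Lemma conj_poly_Fq (a : L) j : in_Fq q (conj_poly a)`_j.
Proof.
have frobD (x y : L) : (x + y) ^+ q = x ^+ q + y ^+ q by have := frobqD 1 x y; rewrite expn1.
have frobM (x y : L) : (x * y) ^+ q = x ^+ q * y ^+ q by rewrite exprMn.
have frob1 : (1 : L) ^+ q = 1 by rewrite expr1n.
have shift : [seq (a ^+ (q ^ i)) ^+ q | i <- iota 0 m]
           = [seq a ^+ (q ^ i) | i <- iota 1 m].
  rewrite -(addn0 1%N) iotaDl -map_comp.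
  by apply: eq_map => i /=; rewrite -exprM add1n expnSr.
have frob_fix : map_poly (fun x => x ^+ q) (conj_poly a) = conj_poly a.
  rewrite /conj_poly (map_prod_XsubC frobD frobM frob1) -map_comp shift.
  apply: perm_big; have [m' Em] : exists m', m = m'.+1 by exists m.-1; rewrite prednK.
  have am : a ^+ (q ^ m'.+1) = a by rewrite -Em frobq_m.
  rewrite Em -[in iota 1 _](addn1 m') iotaD map_cat add1n /= am expn0 expr1.
  by rewrite perm_catC cat1s.
apply/eqP; rewrite -{2}frob_fix coef_map_id0 // expr0n.
by rewrite (negbTE (lt0n_neq0 (ltnW q_gt1))).
Qed.

Lemma Fq_automorphism_frobq (g : L -> L) :
  (forall x y, g (x + y) = g x + g y) -> (forall x y, g (x * y) = g x * g y) ->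
  g 1 = 1 -> (forall c, in_Fq q c -> g c = c) ->
  exists2 i, (i < m)%N & forall x, g x = x ^+ (q ^ i).
Proof.
move=> gD gM g1 gF.
have g0 : g 0 = 0 by apply: (addrI (g 0)); rewrite -gD !addr0.
have [u [genu _]] := unit_generator L; set a := val u.
have g_fix : map_poly g (conj_poly a) = conj_poly a.
  by apply/polyP => j; rewrite coef_map_id0 // gF ?conj_poly_Fq.
have := root_map_endo gD gM g1 (root_conj_poly a).
rewrite g_fix root_prod_XsubC => /mapP [i]; rewrite mem_iota add0n => im gai.
exists i => // x; have [-> | x0] := eqVneq x 0; first by rewrite g0 frobq0.
have [n ->] := genu x x0.
by rewrite (endo_exp gD gM g1) -/a gai exprAC.
Qed.

(* Distinct exponents i < j < m give distinct maps: a generator u of L^*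
   would otherwise satisfy u^(q^j - q^i) = 1 with 0 < q^j - q^i < q^m - 1. *)
Lemma frobq_inj i j : (i < m)%N -> (j < m)%N ->
  (forall x : L, x ^+ (q ^ i) = x ^+ (q ^ j)) -> i = j.
Proof.
have lt_neq i' j' : (i' < j')%N -> (j' < m)%N ->
    ~ (forall x : L, x ^+ (q ^ i') = x ^+ (q ^ j')).
  move=> ij jm E; have [u [_ ou]] := unit_generator L.
  have q1 := q_gt1.
  have qij : (q ^ i' < q ^ j')%N by rewrite ltn_exp2l.
  have qjm : (q ^ j' < q ^ m)%N by rewrite ltn_exp2l.
  have a0 : val u != 0 by rewrite -unitfE (valP u).
  have : (u ^+ (q ^ j' - q ^ i') == 1)%g.
    apply/eqP/val_inj; rewrite FinRing.val_unitX /=.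
    apply: (mulfI (expf_neq0 (q ^ i') a0)).
    by rewrite -exprD subnKC ?(ltnW qij) // -E mulr1.
  rewrite -order_dvdn ou cardL => /dvdn_leq.
  rewrite subn_gt0 qij => /(_ isT).
  have : (0 < q ^ i')%N by rewrite expn_gt0 (ltnW q1).
  lia.
move=> im jm E; case: (ltngtP i j) => // ij; first by case: (lt_neq i j).
by case: (lt_neq j i) => // x; rewrite E.
Qed.

Lemma monomial_Fq_lin_aut (a : L) i (f : L -> L) : a != 0 -> (i < m)%N ->
  (forall x, f x = a * x ^+ (q ^ i)) -> Fq_lin_aut q f.
Proof.
move=> a0 /ltnW im fE; split; first split.
- by move=> x y; rewrite !fE frobqD mulrDr.
- by move=> c x Fc; rewrite !fE exprMn (in_Fq_frobq _ Fc) mulrCA.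
exists (fun y => (y / a) ^+ (q ^ (m - i))) => [x|y].
  by rewrite fE mulrAC divff // mul1r frobqK.
by rewrite fE frobqVK // mulrC divfK.
Qed.

Lemma monomial_fully_linear (a : L) i (f : L -> L) : (i < m)%N ->
  (forall x, f x = a * x ^+ (q ^ i)) -> fully_linear f.
Proof.
move=> /ltnW im fE; apply: semilinear_fully_linear.
  by move=> x y; rewrite !fE frobqD mulrDr.
move=> mu; exists (mu ^+ (q ^ (m - i))) => x.
by rewrite !fE exprMn frobqVK // mulrCA.
Qed.

Lemma fully_linear_monomial (f : L -> L) : Fq_lin_aut q f -> fully_linear f ->
  f 1 != 0 /\ exists2 i, (i < m)%N & forall x, f x = f 1 * x ^+ (q ^ i).
Proof.
move=> [[fD fF] /bij_inj finj] fl.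
have f0 : f 0 = 0 by apply: (addrI (f 0)); rewrite -fD !addr0.
have f10 : f 1 != 0 by rewrite -f0 (inj_eq finj) oner_eq0.
have fM := fully_linear_mul finj fl f10.
split => //; pose g x := f x / f 1.
have [i im gE] : exists2 i, (i < m)%N & forall x, g x = x ^+ (q ^ i).
  apply: Fq_automorphism_frobq.
  - by move=> x y; rewrite /g fD mulrDl.
  - by move=> x y; rewrite /g fM -!mulrA; congr (_ * _); rewrite mulrCA.
  - by rewrite /g divff.
  - by move=> c Fc; rewrite /g -{1}(mulr1 c) fF // mulfK.
by exists i => // x; rewrite -gE /g mulrC divfK.
Qed.

End FrobeniusPowers.

Theorem theorem2 (p k q m : nat) (L : finFieldType) :
  prime p -> (0 < k)%N -> q = (p ^ k)%N -> (0 < m)%N -> #|L| = (q ^ m)%N ->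
  exists s : seq {ffun L -> L},
    [/\ uniq s,
        (forall f : {ffun L -> L}, f \in s <-> (Fq_lin_aut q f /\ fully_linear f))
      & size s = (m * (q ^ m - 1))%N].
Proof.
move=> pp kp qE mp cardL.
pose monomial (ai : L * 'I_m) : {ffun L -> L} := [ffun x => ai.1 * x ^+ (q ^ ai.2)].
pose A := setX [set~ (0 : L)] [set: 'I_m].
exists [seq monomial ai | ai <- enum A]; split.
- rewrite map_inj_in_uniq ?enum_uniq // => [[a i] [b j]].
  rewrite !mem_enum in_setX in_setC1 => /andP [a0 _] _ E.
  have Ex x := congr1 (fun h : {ffun L -> L} => h x) E; rewrite /= in Ex.
  have ab : a = b by have := Ex 1; rewrite !ffunE !expr1n !mulr1.
  subst b; congr pair; apply: val_inj.
  apply: (frobq_inj pp kp qE mp cardL (ltn_ord i) (ltn_ord j)) => x.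
  by have := Ex x; rewrite !ffunE => /(mulfI a0).
- move=> f; split.
  + case/mapP => [[a i]]; rewrite mem_enum in_setX in_setC1 => /andP [a0 _] ->.
    have fE x : monomial (a, i) x = a * x ^+ (q ^ i) by rewrite ffunE.
    split; [exact: (monomial_Fq_lin_aut pp qE cardL a0 (ltn_ord i) fE) |
            exact: (monomial_fully_linear pp qE cardL (ltn_ord i) fE)].
  + case=> aut fl; have [f10 [i im fE]] := fully_linear_monomial pp kp qE mp cardL aut fl.
    apply/mapP; exists (f 1, Ordinal im); first by rewrite mem_enum in_setX in_setC1 f10 in_setT.
    by apply/ffunP => x; rewrite ffunE /= -fE.
- by rewrite size_map -cardE cardsX cardsC1 cardsT card_ord cardL subn1 mulnC.
Qed.
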